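(* Let $n_1<n_2<n_3$ be positive integers with $\gcd(n_1,n_2,n_3)=1$ minimally generating a nonsymmetric numerical semigroup $S$, with $\gcd(\delta_1,\delta_3)=1$. Let $(x_1,x_3)\in\mathbb Z^2$ satisfy $x_1\delta_1+x_3\delta_3=i$ for some $i\in\{1,\ldots,\max\{\delta_1,\delta_3\}\}$, and let $(\tau_1,\tau_2,\tau_3)=x_1\mathbf v_1+x_3\mathbf v_3$. Then $x_1\le 0$ if and only if $\tau_2>0$.
   Context: $S=\langle n_1,n_2,n_3\rangle=\{a_1n_1+a_2n_2+a_3n_3:a_i\in\mathbb N\}$; minimally generated means no $n_i$ lies in the submonoid generated by the other two; $S$ is symmetric if, with $F=\max(\mathbb Z\setminus S)$, $x\in\mathbb Z\setminus S$ implies $F-x\in S$. For $\{i,j,k\}=\{1,2,3\}$, $c_i=\min\{c\in\mathbb Z^+: cn_i\in\langle n_j,n_k\rangle\}$ and, $S$ being nonsymmetric, $r_{ij},r_{ik}$ are the unique positive integers with $c_in_i=r_{ij}n_j+r_{ik}n_k$; moreover $c_i=r_{ji}+r_{ki}$. Set $\delta_1=c_1-r_{12}-r_{13}>0$, $\delta_3=r_{31}+r_{32}-c_3>0$, $\mathbf v_1=(c_1,-r_{12},-r_{13})$ and $\mathbf v_3=(r_{31},r_{32},-c_3)$. *)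

From Stdlib Require Import ZArith Lia.
Open Scope Z_scope.

Definition in2 (a b x : Z) : Prop :=
  exists p q : Z, 0 <= p /\ 0 <= q /\ x = p * a + q * b.

Definition inS (n1 n2 n3 x : Z) : Prop :=
  exists a1 a2 a3 : Z, 0 <= a1 /\ 0 <= a2 /\ 0 <= a3 /\
    x = a1 * n1 + a2 * n2 + a3 * n3.

Definition min_gen (n1 n2 n3 : Z) : Prop :=
  ~ in2 n2 n3 n1 /\ ~ in2 n1 n3 n2 /\ ~ in2 n1 n2 n3.

Definition is_frobenius (n1 n2 n3 F : Z) : Prop :=
  ~ inS n1 n2 n3 F /\ forall x, F < x -> inS n1 n2 n3 x.

Definition symmetric (n1 n2 n3 : Z) : Prop :=
  forall F, is_frobenius n1 n2 n3 F ->
    forall x, ~ inS n1 n2 n3 x -> inS n1 n2 n3 (F - x).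

Definition is_c (ni nj nk c : Z) : Prop :=
  0 < c /\ in2 nj nk (c * ni) /\
  forall c', 0 < c' -> in2 nj nk (c' * ni) -> c <= c'.

(* Since n1 is the smallest generator, c1 n1 = r12 n2 + r13 n3 forces c1 > r12 + r13, and since
   n3 is the largest, c3 n3 = r31 n1 + r32 n2 forces c3 < r31 + r32; so delta1, delta3 > 0.
   With both deltas positive, x1 delta1 + x3 delta3 <= max(delta1, delta3) rules out x1, x3 > 0
   simultaneously, while its positivity rules out x1, x3 <= 0 simultaneously.  Hence exactly one
   of x1, x3 is positive, and tau2 = - r12 x1 + r32 x3 has the sign of x3. *)
From Stdlib Require Import ZArith Lia.
Open Scope Z_scope.

Lemma coeff_sum_lt_of_larger_terms (n a b c p q : Z) :
  0 < n -> n < a -> n < b -> 0 < p -> 0 < q ->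
  c * n = p * a + q * b -> p + q < c.
Proof.
  intros hn ha hb hp hq e.
  assert (hdiff : (c - p - q) * n = p * (a - n) + q * (b - n)) by lia.
  assert (0 < p * (a - n)) by nia.
  assert (0 < q * (b - n)) by nia.
  nia.
Qed.

Lemma coeff_sum_gt_of_smaller_terms (m a b c p q : Z) :
  0 < m -> a < m -> b < m -> 0 < p -> 0 < q ->
  c * m = p * a + q * b -> c < p + q.
Proof.
  intros hm ha hb hp hq e.
  assert (hdiff : (p + q - c) * m = p * (m - a) + q * (m - b)) by lia.
  assert (0 < p * (m - a)) by nia.
  assert (0 < q * (m - b)) by nia.
  nia.
Qed.

Lemma pos_comb_nonpos_coeff (d1 d3 x1 x3 : Z) :
  0 < d1 -> 0 < d3 -> x1 <= 0 -> 0 < x1 * d1 + x3 * d3 -> 0 < x3.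
Proof. intros; nia. Qed.

Lemma max_lt_comb_pos_coeffs (d1 d3 x1 x3 : Z) :
  0 < d1 -> 0 < d3 -> 0 < x1 -> 0 < x3 -> Z.max d1 d3 < x1 * d1 + x3 * d3.
Proof.
  intros hd1 hd3 hx1 hx3.
  assert (d1 <= x1 * d1) by nia.
  assert (d3 <= x3 * d3) by nia.
  lia.
Qed.

Lemma nonpos_iff_pos_opposite_comb (d1 d3 r12 r32 x1 x3 : Z) :
  0 < d1 -> 0 < d3 -> 0 < r12 -> 0 < r32 ->
  0 < x1 * d1 + x3 * d3 <= Z.max d1 d3 ->
  (x1 <= 0 <-> 0 < x1 * (- r12) + x3 * r32).
Proof.
  intros hd1 hd3 hr12 hr32 [hlo hhi]; split; intro h.
  - pose proof (pos_comb_nonpos_coeff d1 d3 x1 x3 hd1 hd3 h hlo); nia.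
  - destruct (Z.le_gt_cases x1 0) as [|hx1]; [assumption|].
    assert (hx3 : 0 < x3) by nia.
    pose proof (max_lt_comb_pos_coeffs d1 d3 x1 x3 hd1 hd3 hx1 hx3); lia.
Qed.

Theorem lemma2p10 :
  forall n1 n2 n3 : Z,
    0 < n1 -> n1 < n2 -> n2 < n3 ->
    Z.gcd (Z.gcd n1 n2) n3 = 1 ->
    min_gen n1 n2 n3 ->
    ~ symmetric n1 n2 n3 ->
  forall c1 r12 r13 c3 r31 r32 : Z,
    is_c n1 n2 n3 c1 ->
    0 < r12 -> 0 < r13 -> c1 * n1 = r12 * n2 + r13 * n3 ->
    is_c n3 n1 n2 c3 ->
    0 < r31 -> 0 < r32 -> c3 * n3 = r31 * n1 + r32 * n2 ->
  let d1 := c1 - r12 - r13 in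
  let d3 := r31 + r32 - c3 in
    Z.gcd d1 d3 = 1 ->
  forall x1 x3 i : Z,
    1 <= i <= Z.max d1 d3 ->
    x1 * d1 + x3 * d3 = i ->
  (* (tau1, tau2, tau3) = x1 * (c1, -r12, -r13) + x3 * (r31, r32, -c3) *)
  let tau2 := x1 * (- r12) + x3 * r32 in
    (x1 <= 0 <-> 0 < tau2).
Proof.
  intros n1 n2 n3 hn1 hn12 hn23 _ _ _ c1 r12 r13 c3 r31 r32 _ hr12 hr13 e1 _ hr31 hr32 e3
    d1 d3 _ x1 x3 i hi hx tau2.
  assert (hd1 : 0 < d1).
  { pose proof (coeff_sum_lt_of_larger_terms n1 n2 n3 c1 r12 r13); unfold d1; lia. }
  assert (hd3 : 0 < d3).
  { pose proof (coeff_sum_gt_of_smaller_terms n3 n1 n2 c3 r31 r32); unfold d3; lia. }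
  apply (nonpos_iff_pos_opposite_comb d1 d3); lia.
Qed.
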